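(* Suppose the GIP bounds satisfy, for all $t>0$ and $v_j\in V$, $l_{j,t}\le l_{\min,0}w^t\le\mathbf h_0^T(\mathbf W^t)_{:,j}\le h_{j,t}$, where $l_{\min,0}=\min_j l_{j,0}$, $w=\min_{(i,j):W_{ij}>0}W_{ij}$, $\mathbf h_0=(h_{j,0})_j$ and $(\mathbf W^t)_{:,j}$ is the $j$-th column of $\mathbf W^t$. Let $\gamma\in[0,1)$ with $\gamma>1-1/\rho(\mathbf W)$, let $k\in\{1,\dots,n\}$, and let $\mathbf c=\big((\mathbf I-(1-\gamma)\mathbf W)^{-1}-\mathbf I\big)\mathbf 1$ (the Katz centrality with factor $1-\gamma$). Consider the problem $$\max_{\mathbf x,\mathbf z}\ s(\mathbf x)\quad\text{s.t. } l_{j,0}z_j\le x_j\le h_{j,0}z_j\ \forall j,\ \ \sum_j z_j\le k,\ \ x_j\in\mathbb R,\ z_j\in\{0,1\},$$ where $s(\mathbf x)=\sum_j\sum_{t=1}^\infty(1-\gamma)^t x_j(t)$ with $(\mathbf x(t))$ the GIP trajectory from $\mathbf x(0)=\mathbf x$. Let $\mathcal A\subseteq\{1,\dots,n\}$ with $|\mathcal A|=k$ be such that $h_{i,0}c_i\le h_{j,0}c_j$ for all $i\notin\mathcal A$, $j\in\mathcal A$. Then $x^*_j=h_{j,0}$, $z^*_j=1$ for $j\in\mathcal A$ and $x^*_j=0$, $z^*_j=0$ for $j\notin\mathcal A$ is an optimal solution, and in this regime $s(\mathbf x)=\mathbf c^T\mathbf x$ for every feasible $\mathbf x$.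
   Context: Let $G=(V,E)$ be a directed weighted network with node set $V=\{v_1,\dots,v_n\}$ and weighted adjacency matrix $\mathbf W=(W_{ij})$, where $W_{ij}>0$ if $(v_i,v_j)\in E$ and $W_{ij}=0$ otherwise. The general information propagation (GIP) model with lower bounds $\{l_{j,t}\}$ and upper bounds $\{h_{j,t}\}$ (real numbers with $0\le l_{j,t}\le h_{j,t}$ for all $t\ge 0$, $v_j\in V$, and $l_{j,0}>0$) is the deterministic discrete-time dynamics $$x_j(t)=f_{j,t}\Big(\sum_i W_{ij}x_i(t-1)\Big),\quad t>0,\ v_j\in V,$$ where $f_{j,t}(x)=0$ if $x<l_{j,t}$, $f_{j,t}(x)=x$ if $l_{j,t}\le x<h_{j,t}$, and $f_{j,t}(x)=h_{j,t}$ if $x\ge h_{j,t}$. An initial state $\mathbf x(0)=(x_j(0))$ is admissible if $x_j(0)\in\{0\}\cup[l_{j,0},h_{j,0}]$ for every $j$. $\mathbf 1$ is the all-ones vector, $\mathbf I$ the identity. *)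

From HB Require Import structures.
From mathcomp Require Import all_boot all_order all_algebra.
From mathcomp Require Import all_classical all_reals.
From mathcomp Require Import topology normedtype sequences.
From mathcomp Require Import complex.

Set Implicit Arguments.
Unset Strict Implicit.
Unset Printing Implicit Defensive.

Import Order.TTheory GRing.Theory Num.Theory.
Import numFieldNormedType.Exports.
Local Open Scope ring_scope.

Section GIP.
Variables (R : realType) (n : nat).

Definition gip_f (l h : R) (x : R) : R :=
  if x < l then 0 else if x < h then x else h.

(* GIP trajectory x(t) from the initial state x0; l t j = l_{j,t}, h t j = h_{j,t},
   W i j = W_{ij}. *)
Fixpoint gip_traj (W : 'M[R]_n) (l h : nat -> 'I_n -> R) (x0 : 'I_n -> R)
  (t : nat) : 'I_n -> R :=
  match t with
  | 0 => x0
  | t'.+1 => fun j =>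
      gip_f (l t'.+1 j) (h t'.+1 j) (\sum_i W i j * gip_traj W l h x0 t' i)
  end.

Definition gip_partial (W : 'M[R]_n) (l h : nat -> 'I_n -> R) (gamma : R)
  (x0 : 'I_n -> R) (j : 'I_n) (N : nat) : R :=
  \sum_(1 <= t < N) (1 - gamma) ^+ t * gip_traj W l h x0 t j.

Definition gip_score (W : 'M[R]_n) (l h : nat -> 'I_n -> R) (gamma : R)
  (x0 : 'I_n -> R) : R :=
  \sum_j limn (gip_partial W l h gamma x0 j).

(* w = min of the positive entries of W (= 0 if W has no positive entry). *)
Definition min_pos_weight (W : 'M[R]_n) : R :=
  \big[Num.min/(\big[Num.max/0]_(p : 'I_n * 'I_n) W p.1 p.2)]_(p : 'I_n * 'I_n | 0 < W p.1 p.2)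
     W p.1 p.2.

Definition is_spectral_radius (W : 'M[R]_n) (r : R) : Prop :=
  (exists2 lam : R[i], eigenvalue (map_mx (fun a => (a%:C)%C) W) lam & `|lam| = (r%:C)%C)
  /\ (forall lam : R[i], eigenvalue (map_mx (fun a => (a%:C)%C) W) lam -> `|lam| <= (r%:C)%C).

Definition katz (W : 'M[R]_n) (gamma : R) : 'I_n -> R :=
  fun j => ((invmx (1%:M - (1 - gamma) *: W) - 1%:M) *m (const_mx 1 : 'cV[R]_n)) j ord0.

Definition feasible (l h : nat -> 'I_n -> R) (k : nat) (x : 'I_n -> R)
  (z : 'I_n -> bool) : Prop :=
  (forall j, l 0%N j * (z j)%:R <= x j <= h 0%N j * (z j)%:R)
  /\ (\sum_j (z j : nat) <= k)%N.

End GIP.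

From mathcomp Require Import all_boot all_order all_algebra.
From mathcomp Require Import all_classical all_reals.
From mathcomp Require Import topology normedtype sequences.
From mathcomp Require Import complex.
From mathcomp Require Import ring lra.
Import Order.TTheory GRing.Theory Num.Theory.
Import numFieldNormedType.Exports.
Import ComplexField.Normc.
Local Open Scope ring_scope.

(* In the bound regime every positive entry of x^T W^t is at least
   l_min w^t >= l_{j,t} and at most h_0^T W^t e_j <= h_{j,t}, so from an
   admissible state the thresholds and saturations of the GIP dynamics never
   act and x(t) = x^T W^t.  Since (1 - gamma) rho(W) < 1, Cayley-Hamilton over
   the complex numbers gives ((1 - gamma) W)^N -> 0, so the Neumann series
   converges and s(x) = c^T x with c >= 0.  Maximising c^T x over the feasible
   set is then an exchange argument: each selected x_j is at most h_{j,0}, and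
   the set A carries the k largest values h_{j,0} c_j. *)

Lemma sum_pow_mul1B {T : pzRingType} (x : T) N :
  (\sum_(1 <= t < N.+1) x ^+ t) * (1 - x) = x - x ^+ N.+1.
Proof.
elim: N => [|N IH]; first by rewrite big_geq // mul0r expr1 subrr.
by rewrite big_nat_recr //= mulrDl IH mulrBr mulr1 -exprSr addrA subrK.
Qed.

Lemma scalemxXn {R : comNzRingType} {n} (a : R) (W : 'M[R]_n) t :
  (a *: W) ^+ t = a ^+ t *: W ^+ t.
Proof.
elim: t => [|t IH]; first by rewrite !expr0 scale1r.
by rewrite !exprSr IH -!mulmxE -scalemxAl -scalemxAr scalerA.
Qed.

Lemma ler_sum_term {R : numDomainType} {I : finType} (F : I -> R) k :
  (forall i, 0 <= F i) -> F k <= \sum_i F i.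
Proof. by move=> F_ge0; rewrite (bigD1 k) //= lerDl sumr_ge0. Qed.

Lemma pow_mx_ge0 {R : numDomainType} {n} (W : 'M[R]_n) :
  (forall i j, 0 <= W i j) -> forall t i j, 0 <= (W ^+ t) i j.
Proof.
move=> W0; elim=> [|t IH] i j; first by rewrite expr0 mxE ler0n.
by rewrite exprSr -mulmxE mxE sumr_ge0 // => k _; rewrite mulr_ge0.
Qed.

Lemma bigmax_seq_attained {R : realDomainType} {T : eqType} {F : T -> R} {s : seq T} :
  (forall y, 0 <= F y) -> s != [::] ->
  exists2 z, z \in s & \big[Num.max/0]_(y <- s) F y = F z.
Proof.
move=> F0; elim: s => [//|y s IH] _; rewrite big_cons.
have [->|/IH [z zs ->]] := eqVneq s [::].
  by exists y; rewrite ?mem_head // big_nil; apply/max_idPl.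
have [yz|zy] := leP (F y) (F z).
  by exists z; rewrite ?inE ?zs ?orbT //; apply/max_idPr.
by exists y; rewrite ?mem_head //; apply/max_idPl/ltW.
Qed.

Lemma char_roots_annihilate {F : comNzRingType} {n} {M : 'M[F]_n.+1} {rs : seq F} :
  char_poly M = \prod_(z <- rs) ('X - z%:P) -> \prod_(z <- rs) (M - z%:M) = 0.
Proof.
move=> chM; rewrite -(Cayley_Hamilton M) chM rmorph_prod; apply: eq_bigr => z _.
by rewrite rmorphB /= horner_mx_X horner_mx_C.
Qed.

Section SequenceLimits.
Context {R : realType}.
Local Open Scope classical_set_scope.
Implicit Types u d : nat -> R.

Lemma cvg_sumr {I : finType} {F : I -> nat -> R} {a : I -> R} :
  (forall i, F i @ \oo --> a i) -> (fun N => \sum_i F i N) @ \oo --> \sum_i a i.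
Proof. by move=> Fa; apply: cvg_big => //; exact: add_continuous. Qed.

Lemma cvg0_sumr {I : finType} {F : I -> nat -> R} :
  (forall i, F i @ \oo --> 0) -> (fun N => \sum_i F i N) @ \oo --> 0.
Proof. by move=> F0; have := cvg_sumr F0; rewrite big1. Qed.

(* Unrolling gives [u (N0 + m) <= q ^+ m * u N0 + e / 2] once [|d| <= e (1 - q) / 2]. *)
Lemma cvg0_contraction (q : R) u d : 0 <= q < 1 -> (forall N, 0 <= u N) ->
  (forall N, u N.+1 <= q * u N + d N) -> d @ \oo --> 0 -> u @ \oo --> 0.
Proof.
move=> /andP[q0 q1] u0 ud d0; apply/cvgr0Pnorm_le => e e0.
have e2 : 0 < e / 2 by rewrite divr_gt0.
have q1' : 0 < 1 - q by rewrite subr_gt0.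
have qn : `|q| < 1 by rewrite ger0_norm.
have [N0 _ dN0] := cvgr0_norm_le _ d0 _ (mulr_gt0 e2 q1').
have unroll m : u (N0 + m)%N <= q ^+ m * u N0 + e / 2.
  elim: m => [|m IH]; first by rewrite addn0 expr0 mul1r lerDl ltW.
  rewrite addnS; apply: le_trans (ud _) _.
  have := le_trans (ler_norm _) (dN0 (N0 + m)%N (leq_addr _ _)).
  have := ler_wpM2l q0 IH; rewrite exprS; nra.
have [M _ geoM] := cvgr0_norm_le _ (cvg_geometric (u N0) qn) _ e2.
exists (N0 + M)%N => // N /= NM; rewrite ger0_norm //.
have -> : N = (N0 + (N - N0))%N by rewrite subnKC // (leq_trans (leq_addr _ _) NM).
apply: le_trans (unroll _) _.
have /geoM /= : (M <= N - N0)%N by rewrite leq_subRL // (leq_trans (leq_addr _ _) NM).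
rewrite /geometric mulrC => /(le_trans (ler_norm _)); lra.
Qed.

End SequenceLimits.

Section ComplexPowers.
Context {R : realType}.
Local Open Scope classical_set_scope.

Lemma normc_ge0 (z : R[i]) : 0 <= normc z.
Proof. by case: z => a b; rewrite /normc sqrtr_ge0. Qed.

Lemma normc_real (x : R) : normc (x%:C)%C = `|x|.
Proof. by rewrite /normc /= expr0n /= addr0 sqrtr_sqr. Qed.

(* If [g N := c ^+ N * (P *m M ^+ N) i j], then [(M - z) * P] contributes the
   error term in [g N.+1 = (c * z) * g N + c * h N], a contraction as [|c z| < 1]. *)
Lemma cvg0_peel_factors {n} (M : 'M[R[i]]_n) (c : R[i]) (s : seq R[i]) i j :
  (forall z, z \in s -> normc (c * z) < 1) ->
  (fun N => normc (c ^+ N * ((\prod_(z <- s) (M - z%:M)) *m M ^+ N) i j))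
    @ \oo --> 0 ->
  (fun N => normc (c ^+ N * (M ^+ N) i j)) @ \oo --> 0.
Proof.
elim: s => [|z s IH] cz hv.
  by rewrite big_nil in hv; under eq_fun do rewrite -[M ^+ _]mul1mx.
apply: IH => [y ys|]; first by apply: cz; rewrite inE ys orbT.
set P := \prod_(y <- s) (M - y%:M) in hv *.
have PM : P * M = M * P.
  apply/esym/commr_prod => y _.
  by rewrite /GRing.comm mulrBr mulrBl -!mulmxE scalar_mxC.
set g := fun N => c ^+ N * (P *m M ^+ N) i j.
set h := fun N => c ^+ N * ((\prod_(y <- z :: s) (M - y%:M)) *m M ^+ N) i j.
have g_rec N : g N.+1 = (c * z) * g N + c * h N.
  rewrite /g /h big_cons.
  have -> : (M - z%:M) * P *m M ^+ N = P *m M ^+ N.+1 - z *: (P *m M ^+ N).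
    by rewrite -mul_scalar_mx !mulmxE exprS !mulrBl -PM !mulrA.
  rewrite !mxE exprS; ring.
apply: (cvg0_contraction (normc (c * z)) _ (fun N => normc (c * h N))).
- by rewrite normc_ge0 cz // inE eqxx.
- by move=> N; apply: normc_ge0.
- by move=> N; rewrite -/(g N.+1) g_rec; apply: le_trans (le_normcD _ _) _; rewrite normcM.
- rewrite -(mulr0 (normc c)); under eq_fun do rewrite normcM.
  exact: cvgMr.
Qed.

Lemma char_roots_spectral_radius {n} {W : 'M[R]_n} {rs : seq R[i]} :
  char_poly (map_mx (fun a => a%:C%C) W) = \prod_(z <- rs) ('X - z%:P) ->
  rs != [::] -> is_spectral_radius W (\big[Num.max/0]_(z <- rs) normc z).
Proof.
move=> chW rs0; have [z zs zmax] := bigmax_seq_attained normc_ge0 rs0.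
have eigE lam : eigenvalue (map_mx (fun a => a%:C%C) W) lam = (lam \in rs).
  by rewrite eigenvalue_root_char chW root_prod_XsubC.
split=> [|lam]; first by exists z; rewrite ?eigE // zmax.
rewrite eigE => lams; change ((normc lam)%:C%C <= (\big[Num.max/0]_(z <- rs) normc z)%:C%C).
by rewrite lecR (le_bigmax_seq _ _ xpredT).
Qed.

(* Over [R[i]] the characteristic polynomial splits, Cayley-Hamilton annihilates
   [M] by the product of its factors, and each factor is peeled off since
   [a |z| <= a rho(W) < 1]. *)
Lemma scaled_pow_cvg0 {n} (W : 'M[R]_n) (a : R) : 0 <= a ->
  (forall r, is_spectral_radius W r -> a * r < 1) ->
  forall i j, (fun N => ((a *: W) ^+ N) i j) @ \oo --> 0.
Proof.
case: n W => [|n] W a0 aW i j; first by case: i.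
pose M := map_mx (fun x : R => x%:C%C) W.
have [rs chM] := closed_field_poly_normal (char_poly M).
rewrite (monicP (char_poly_monic M)) scale1r in chM.
have a_rs z : z \in rs -> normc (a%:C%C * z) < 1.
  move=> zs; rewrite normcM normc_real ger0_norm //.
  have rs0 : rs != [::] by apply: contraTneq zs => ->.
  apply: le_lt_trans (aW _ (char_roots_spectral_radius chM rs0)).
  by rewrite ler_wpM2l // (le_bigmax_seq _ _ xpredT).
apply/norm_cvg0P.
have normE N : `|((a *: W) ^+ N) i j| = normc (a%:C%C ^+ N * (M ^+ N) i j).
  have -> : M ^+ N = map_mx (fun x => x%:C%C) (W ^+ N) by rewrite rmorphXn.
  by rewrite -rmorphXn mxE -rmorphM normc_real exprZn mxE.
under eq_fun do rewrite normE.
apply: (cvg0_peel_factors _ _ _ i j a_rs); rewrite (char_roots_annihilate chM).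
by under eq_fun do rewrite mul0mx mxE mulr0 normc0; exact: cvg_cst.
Qed.

End ComplexPowers.

Section NeumannSeries.
Context {R : realType} {n : nat} (B : 'M[R]_n).
Local Open Scope classical_set_scope.
Hypothesis B_pow_cvg0 : forall i j, (fun N => (B ^+ N) i j) @ \oo --> 0.

Lemma mulmx_pow_cvg0 {p q} (A : 'M[R]_(p, n)) (C : 'M[R]_(n, q)) i j :
  (fun N => (A *m B ^+ N *m C) i j) @ \oo --> 0.
Proof.
under eq_fun do rewrite mxE; apply: cvg0_sumr => l.
under eq_fun do rewrite mxE mulr_suml; apply: cvg0_sumr => k.
rewrite -(mul0r (C l j)); apply: cvgMl.
by rewrite -(mulr0 (A i k)); apply: cvgMr.
Qed.

(* A vector fixed by [B] is fixed by every [B ^+ N], hence vanishes. *)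
Lemma unitmx_1B : 1%:M - B \in unitmx.
Proof.
rewrite -row_free_unit -kermx_eq0; set K := kermx _.
have KB : K *m B = K.
  by apply/eqP; rewrite eq_sym -subr_eq0 -[X in X - _]mulmx1 -mulmxBr mulmx_ker.
have KBN N : K *m B ^+ N = K.
  by elim: N => [|N IH]; rewrite ?expr0 ?mulmx1 // exprSr -mulmxE mulmxA IH.
apply/eqP/matrixP => i k; rewrite [RHS]mxE.
have KBN_ik : (fun N => (K *m B ^+ N *m 1%:M) i k) = fun=> K i k.
  by apply/funext => N; rewrite mulmx1 KBN.
have := mulmx_pow_cvg0 K 1%:M i k; rewrite KBN_ik.
by move/(cvg_lim (@Rhausdorff R)) => <-; rewrite lim_cst.
Qed.

Lemma neumann_partial_sum N : \sum_(1 <= t < N.+1) B ^+ t =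
  B *m invmx (1%:M - B) - B ^+ N.+1 *m invmx (1%:M - B).
Proof.
rewrite -mulmxBl -sum_pow_mul1B mulmxE -mulrA.
by have -> : (1 - B) * invmx (1%:M - B) = 1 := mulmxV unitmx_1B; rewrite mulr1.
Qed.

Lemma neumann_cvg i j : (fun N => (\sum_(1 <= t < N) B ^+ t) i j) @ \oo -->
  (B *m invmx (1%:M - B)) i j.
Proof.
set BQ := B *m invmx (1%:M - B).
have partialE : (fun N => (\sum_(1 <= t < N.+1) B ^+ t) i j) =
    fun N => BQ i j - (1%:M *m B ^+ N *m BQ) i j.
  apply/funext => N; rewrite neumann_partial_sum exprSr -mulmxE -mulmxA mul1mx.
  by rewrite !mxE.
suff tail : (fun N => BQ i j - (1%:M *m B ^+ N *m BQ) i j) @ \oo --> BQ i j.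
  by rewrite -cvg_shiftS partialE.
rewrite -[X in _ --> X]subr0; apply: cvgB; [exact: cvg_cst|exact: mulmx_pow_cvg0].
Qed.

Lemma neumann_ge0 : (forall i j, 0 <= B i j) ->
  forall i j, 0 <= (B *m invmx (1%:M - B)) i j.
Proof.
move=> B0 i j; apply: (closed_cvg _ (@closed_ge R 0) _ _ (neumann_cvg i j)).
by apply: nearW => N; rewrite /= summxE; apply: sumr_ge0 => t _; apply: pow_mx_ge0.
Qed.

End NeumannSeries.

Section MinPosWeight.
Context {R : realType} {n : nat} {W : 'M[R]_n}.
Hypothesis W_ge0 : forall i j, 0 <= W i j.

Lemma min_pos_weight_ge0 : 0 <= min_pos_weight W.
Proof. by apply: le_bigmin => [|p /ltW //]; apply: bigmax_ge_id. Qed.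

Lemma min_pos_weight_le i j : 0 < W i j -> min_pos_weight W <= W i j.
Proof. exact: (bigmin_le_cond _ (j := (i, j)) (fun p => W p.1 p.2)). Qed.

Lemma min_pos_weight_pow_le t i j :
  0 < (W ^+ t) i j -> min_pos_weight W ^+ t <= (W ^+ t) i j.
Proof.
elim: t i j => [|t IH] i j; first by rewrite expr0 !mxE; case: eqP; rewrite ?ltxx.
have term_ge0 k : 0 <= (W ^+ t) i k * W k j by rewrite mulr_ge0 ?pow_mx_ge0.
rewrite exprSr -mulmxE mxE => sum_gt0.
have /hasP[k _ /andP[_]] : has (fun k => true && (0 < (W ^+ t) i k * W k j)) (index_enum 'I_n).
  by rewrite -psumr_neq0 ?lt0r_neq0.
rewrite mulr_ge0_gt0 ?pow_mx_ge0 // => /andP[Wt_gt0 W_gt0].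
apply: le_trans (ler_sum_term _ k term_ge0).
by rewrite exprSr ler_pM ?exprn_ge0 ?min_pos_weight_ge0 ?IH ?min_pos_weight_le.
Qed.

End MinPosWeight.

Section Katz.
Context {R : realType} {n : nat} {W : 'M[R]_n} {gamma : R}.
Local Open Scope classical_set_scope.
Let B := (1 - gamma) *: W.
Hypothesis B_pow_cvg0 : forall i j, (fun N => (B ^+ N) i j) @ \oo --> 0.

Lemma katz_neumann i : katz W gamma i = \sum_j (B *m invmx (1%:M - B)) i j.
Proof.
have BQ : B *m invmx (1%:M - B) = invmx (1%:M - B) - 1%:M.
  have := mulmxV (unitmx_1B B B_pow_cvg0); rewrite mulmxBl mul1mx => QBQ.
  by rewrite -[X in _ = _ - X]QBQ opprB [RHS]addrC subrK.
by rewrite /katz -/B BQ mxE; apply: eq_bigr => j _; rewrite [const_mx 1 _ _]mxE mulr1.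
Qed.

Lemma katz_ge0 : (forall i j, 0 <= W i j) -> gamma <= 1 -> forall i, 0 <= katz W gamma i.
Proof.
move=> W_ge0 gamma_le1 i; rewrite katz_neumann sumr_ge0 // => j _.
by apply: neumann_ge0 => // i' j'; rewrite mxE mulr_ge0 ?subr_ge0.
Qed.

End Katz.

Definition zero_or_within {R : realType} (lo hi y : R) : Prop :=
  y = 0 \/ lo <= y <= hi.

Definition admissible {R : realType} {n : nat} (l h : nat -> 'I_n -> R)
  (x : 'I_n -> R) : Prop :=
  forall j, zero_or_within (l 0%N j) (h 0%N j) (x j).

Lemma gip_f_id {R : realType} {lo hi y : R} : 0 <= lo <= hi ->
  zero_or_within lo hi y -> gip_f lo hi y = y.
Proof.
rewrite /gip_f => /andP[lo0 lohi] [->|/andP[loy yhi]].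
  case: ltP => // _; case: ltP => // hi_le0.
  by apply/eqP; rewrite eq_le hi_le0 (le_trans lo0).
rewrite ltNge loy /=; case: ltP => // hiy.
by apply/eqP; rewrite eq_le hiy yhi.
Qed.

Section LinearRegime.
Context {R : realType} {n : nat} {W : 'M[R]_n} {l h : nat -> 'I_n -> R}.
Local Open Scope classical_set_scope.
Hypothesis W_ge0 : forall i j, 0 <= W i j.
Hypothesis bounds_ge0 : forall t j, 0 <= l t j <= h t j.
Hypothesis bounds_regime : forall t j, (0 < t)%N ->
  let lmin0 := \big[Num.min/l 0%N j]_(i : 'I_n) l 0%N i in
  l t j <= lmin0 * min_pos_weight W ^+ t
  /\ lmin0 * min_pos_weight W ^+ t <= \sum_i h 0%N i * (W ^+ t) i j
  /\ \sum_i h 0%N i * (W ^+ t) i j <= h t j.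
Context {x : 'I_n -> R}.
Hypothesis x_adm : admissible l h x.

Lemma admissible_ge0 i : 0 <= x i.
Proof.
have /andP[l0 _] := bounds_ge0 0 i.
by case: (x_adm i) => [->|/andP[lx _]] //; apply: le_trans lx.
Qed.

Lemma admissible_le_h0 i : x i <= h 0%N i.
Proof.
have /andP[l0 lh] := bounds_ge0 0 i.
by case: (x_adm i) => [->|/andP[_ //]]; apply: le_trans lh.
Qed.

Lemma linear_state_admissible t j : (0 < t)%N ->
  zero_or_within (l t j) (h t j) (\sum_i x i * (W ^+ t) i j).
Proof.
move=> t_gt0; set y := \sum_i _; have [l_lw [lw_hW hW_h]] := bounds_regime t j t_gt0.
have term_ge0 i : 0 <= x i * (W ^+ t) i j.
  by rewrite mulr_ge0 ?admissible_ge0 ?pow_mx_ge0.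
have y_le_h : y <= h t j.
  apply: le_trans hW_h; apply: ler_sum => i _.
  by rewrite ler_wpM2r ?pow_mx_ge0 ?admissible_le_h0.
have [->|y_neq0] := eqVneq y 0; [by left | right; rewrite y_le_h andbT].
have /hasP[k _ /andP[_]] : has (fun i => true && (0 < x i * (W ^+ t) i j)) (index_enum 'I_n).
  by rewrite -psumr_neq0.
rewrite mulr_ge0_gt0 ?admissible_ge0 ?pow_mx_ge0 // => /andP[xk_gt0 Wt_gt0].
apply: le_trans l_lw (le_trans _ (ler_sum_term _ k term_ge0)).
rewrite ler_pM ?exprn_ge0 ?min_pos_weight_ge0 ?min_pos_weight_pow_le //.
  by apply: le_bigmin => [|i _]; [case/andP: (bounds_ge0 0 j) | case/andP: (bounds_ge0 0 i)].
case: (x_adm k) => [xk0|/andP[lx _]]; first by rewrite xk0 ltxx in xk_gt0.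
exact: le_trans (bigmin_le _ k _) lx.
Qed.

Lemma gip_traj_linear t j : gip_traj W l h x t j = \sum_i x i * (W ^+ t) i j.
Proof.
elim: t j => [|t IH] j.
  rewrite /= expr0 (bigD1 j) //= mxE eqxx mulr1 big1 ?addr0 // => i ij.
  by rewrite mxE (negbTE ij) mulr0.
rewrite /=; have -> : \sum_i W i j * gip_traj W l h x t i = \sum_i x i * (W ^+ t.+1) i j.
  under eq_bigr do rewrite IH mulr_sumr.
  rewrite exchange_big; apply: eq_bigr => k _ /=.
  rewrite exprSr -mulmxE mxE mulr_sumr; apply: eq_bigr => i _.
  by rewrite mulrCA [W i j * _]mulrC.
exact: gip_f_id (bounds_ge0 t.+1 j) (linear_state_admissible t.+1 j isT).
Qed.

Lemma gip_partial_linear gamma j N : gip_partial W l h gamma x j N =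
  \sum_i x i * (\sum_(1 <= t < N) ((1 - gamma) *: W) ^+ t) i j.
Proof.
rewrite /gip_partial; under eq_bigr do rewrite gip_traj_linear mulr_sumr.
rewrite exchange_big; apply: eq_bigr => i _ /=.
rewrite summxE mulr_sumr; apply: eq_bigr => t _.
by rewrite scalemxXn mxE mulrCA.
Qed.

Context {gamma : R}.
Let B := (1 - gamma) *: W.
Hypothesis B_pow_cvg0 : forall i j, (fun N => (B ^+ N) i j) @ \oo --> 0.

Lemma gip_partial_cvg j : gip_partial W l h gamma x j @ \oo -->
  \sum_i x i * (B *m invmx (1%:M - B)) i j.
Proof.
have -> : gip_partial W l h gamma x j =
    fun N => \sum_i x i * (\sum_(1 <= t < N) B ^+ t) i j.
  by apply/funext => N; exact: gip_partial_linear.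
apply: cvg_sumr => i; apply: cvgMr; exact: neumann_cvg.
Qed.

Lemma gip_score_katz : gip_score W l h gamma x = \sum_j katz W gamma j * x j.
Proof.
rewrite /gip_score (eq_bigr _ (fun j _ => cvg_lim (@Rhausdorff R) (gip_partial_cvg j))).
rewrite exchange_big; apply: eq_bigr => i _ /=.
by rewrite (katz_neumann B_pow_cvg0) mulr_suml; apply: eq_bigr => j _; rewrite mulrC.
Qed.

End LinearRegime.


Lemma card_setD_le {I : finType} (S A : {set I}) :
  (#|S| <= #|A|)%N -> (#|S :\: A| <= #|A :\: S|)%N.
Proof. by move=> SA; rewrite -(leq_add2l #|S :&: A|) cardsID finset.setIC cardsID. Qed.

(* Exchange argument: the maximum of [v] on [S :\: A] separates the sums over
   [S :\: A] and [A :\: S], and the former set is no larger. *)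
Lemma sum_le_top_set {R : realDomainType} {I : finType} (v : I -> R) (S A : {set I}) :
  (forall i, 0 <= v i) -> (#|S| <= #|A|)%N ->
  (forall i j, i \notin A -> j \in A -> v i <= v j) ->
  \sum_(i in S) v i <= \sum_(i in A) v i.
Proof.
move=> v_ge0 SA vA; rewrite (big_setID A) [leRHS](big_setID S) finset.setIC /=.
rewrite lerD2l; set m := \big[Num.max/0]_(i in S :\: A) v i.
apply: (@le_trans _ _ (\sum_(i in S :\: A) m)).
  by apply: ler_sum => i iSA; apply: le_bigmax_cond.
apply: (@le_trans _ _ (\sum_(i in A :\: S) m)).
  by rewrite !sumr_const ler_wpMn2l ?bigmax_ge_id ?card_setD_le.
apply: ler_sum => j; rewrite inE => /andP[jS jA].
by apply: bigmax_le => // i; rewrite inE => /andP[iA _]; apply: vA.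
Qed.

Section Feasibility.
Context {R : realType} {n : nat} {l h : nat -> 'I_n -> R} {k : nat}.

Lemma feasible_admissible {x z} : feasible l h k x z -> admissible l h x.
Proof.
move=> [xz _] j; have := xz j; case: (z j); rewrite /= ?mulr1 ?mulr0 => /andP[lx xh].
  by right; rewrite lx xh.
by left; apply/eqP; rewrite eq_le xh lx.
Qed.

Lemma feasible_card {x z} : feasible l h k x z -> (#|[set j | z j]| <= k)%N.
Proof.
move=> [_]; apply: leq_trans; rewrite -sum1_card big_mkcond /=.
by apply: leq_sum => j _; rewrite inE; case: (z j).
Qed.

Lemma feasible_value_le {c : 'I_n -> R} {x z} : (forall j, 0 <= c j) ->
  feasible l h k x z -> \sum_j c j * x j <= \sum_(j in [set j | z j]) h 0%N j * c j.
Proof.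
move=> c_ge0 [xz _]; rewrite [leRHS]big_mkcond /=; apply: ler_sum => j _.
have := xz j; rewrite inE; case: (z j); rewrite /= ?mulr1 ?mulr0 => /andP[lx xh].
  by rewrite mulrC ler_wpM2r.
have -> : x j = 0 by apply/eqP; rewrite eq_le xh lx.
by rewrite mulr0.
Qed.

Lemma top_feasible (A : {set 'I_n}) : (forall j, l 0%N j <= h 0%N j) -> #|A| = k ->
  feasible l h k (fun j => if j \in A then h 0%N j else 0) (fun j => j \in A).
Proof.
move=> lh cardA; split=> [j|].
  by case: (j \in A); rewrite /= ?mulr1n ?mulr0n ?mulr1 ?mulr0 lexx ?lh.
rewrite -cardA -sum1_card [leqRHS]big_mkcond /=.
by apply: leq_sum => j _; case: (j \in A).
Qed.

Lemma top_value (A : {set 'I_n}) (c : 'I_n -> R) :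
  \sum_j c j * (if j \in A then h 0%N j else 0) = \sum_(j in A) h 0%N j * c j.
Proof.
by rewrite [RHS]big_mkcond; apply: eq_bigr => j _; case: (j \in A); rewrite ?mulr0 // mulrC.
Qed.

End Feasibility.

Theorem theorem5 (R : realType) (n : nat) (W : 'M[R]_n)
  (l h : nat -> 'I_n -> R) (gamma : R) (k : nat) (A : {set 'I_n}) :
  (forall i j, 0 <= W i j) ->
  (forall t j, 0 <= l t j <= h t j) ->
  (forall j, 0 < l 0%N j) ->
  (forall t j, (0 < t)%N ->
     let lmin0 := \big[Num.min/l 0%N j]_(i : 'I_n) l 0%N i in
     l t j <= lmin0 * min_pos_weight W ^+ t
     /\ lmin0 * min_pos_weight W ^+ t <= \sum_i h 0%N i * (W ^+ t) i j
     /\ \sum_i h 0%N i * (W ^+ t) i j <= h t j) ->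
  0 <= gamma -> gamma < 1 ->
  (forall r, is_spectral_radius W r -> (1 - gamma) * r < 1) ->
  (1 <= k <= n)%N ->
  #|A| = k ->
  (forall i j, i \notin A -> j \in A ->
     h 0%N i * katz W gamma i <= h 0%N j * katz W gamma j) ->
  let xs := fun j => if j \in A then h 0%N j else 0 in
  let zs := fun j => j \in A in
  [/\ feasible l h k xs zs,
      (forall x z, feasible l h k x z ->
         gip_score W l h gamma x <= gip_score W l h gamma xs)
    & (forall x z, feasible l h k x z ->
         (forall j, cvgn (gip_partial W l h gamma x j))
         /\ gip_score W l h gamma x = \sum_j katz W gamma j * x j)].
Proof.
move=> W_ge0 bounds_ge0 _ regime _ gamma_lt1 rho_lt1 _ cardA A_top xs zs.
have a_ge0 : 0 <= 1 - gamma by rewrite subr_ge0 ltW.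
have B_pow_cvg0 := scaled_pow_cvg0 W (1 - gamma) a_ge0 rho_lt1.
have c_ge0 := katz_ge0 B_pow_cvg0 W_ge0 (ltW gamma_lt1).
have score x z (xz : feasible l h k x z) :=
  gip_score_katz W_ge0 bounds_ge0 regime (feasible_admissible xz) B_pow_cvg0.
have l0_le_h0 j : l 0%N j <= h 0%N j by case/andP: (bounds_ge0 0%N j).
have h0_ge0 j : 0 <= h 0%N j by case/andP: (bounds_ge0 0%N j) => /le_trans; apply.
have top := top_feasible A l0_le_h0 cardA.
split=> // x z xz.
  rewrite (score _ _ xz) (score _ _ top) top_value.
  apply: le_trans (feasible_value_le c_ge0 xz) (sum_le_top_set _ _ _ _ _ A_top).
    by move=> j; rewrite mulr_ge0.
  by rewrite cardA (feasible_card xz).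
split; last exact: score xz.
move=> j; apply: cvgP.
exact: (gip_partial_cvg W_ge0 bounds_ge0 regime (feasible_admissible xz) B_pow_cvg0 j).
Qed.
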